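(* Assume (A1)–(A3). If $m_1<0$, then for every $\theta>0$ there exist $C>0$ and $\delta>0$ such that for all $(i,j)\in\mathbb N\times\mathbb Z$, $k\in\mathbb N$ and $n\in\mathbb N$, \[\mathbb P_{(i,j)}(T_1^k\ge n)\le C\exp(\theta i-\delta n),\] where $T_1^k=\inf\{n>0: X_1(n)\le\max(k_0-1,k)\}$.
   Context: Let $\mathbb N=\{0,1,2,\dots\}$ and fix an integer $k_0\ge1$. Let $\mu$, $\mu'_j$ ($0\le j<k_0$), $\mu''_i$ ($0\le i<k_0$), $\mu_{ij}$ ($0\le i,j<k_0$) be probability measures on $\mathbb Z^2$. The random walk $Z=(X(n),Y(n))$ on $\mathbb N^2$ has transition probabilities $p((i,j)\to(i',j'))$ equal to $\mu(i'-i,j'-j)$ if $i,j\ge k_0$; $\mu'_j(i'-i,j'-j)$ if $i\ge k_0$, $0\le j<k_0$; $\mu''_i(i'-i,j'-j)$ if $0\le i<k_0$, $j\ge k_0$; $\mu_{ij}(i'-i,j'-j)$ if $0\le i,j<k_0$. Assumptions: (A1) $\mu(a,b)=0$ if $a<-k_0$ or $b<-k_0$; $\mu'_j(a,b)=0$ if $a<-k_0$ or $b<-j$; $\mu''_i(a,b)=0$ if $b<-k_0$ or $a<-i$; $\mu_{ij}(a,b)=0$ if $a<-i$ or $b<-j$. (A2) There are $\delta,\gamma,C>0$ with $\sup_{(i,j)\in\mathbb N^2}\mathbb E_{(i,j)}[\exp(\delta(X(1)-i)+\gamma(Y(1)-j))]\le C$. (A3) $Z_0,Z_1,Z_2,Z$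 are irreducible on their state spaces. $Z_0$: random walk on $\mathbb Z^2$ with increment law $\mu$; $m_1=\sum a\mu(a,b)$. $Z_1=(X_1,Y_1)$: Markov chain on $\mathbb N\times\mathbb Z$ with transitions $\mu(i'-i,j'-j)$ from $(i,j)$ if $i\ge k_0$ and $\mu''_i(i'-i,j'-j)$ if $0\le i<k_0$; $\mathbb P_{(i,j)}$ is its law from $(i,j)$. $Z_2$: Markov chain on $\mathbb Z\times\mathbb N$ with transitions $\mu$ if $j\ge k_0$ and $\mu'_j$ if $0\le j<k_0$. *)

From HB Require Import structures.
From mathcomp Require Import all_boot all_order all_algebra.
From mathcomp Require Import all_classical all_reals all_analysis.
Set Implicit Arguments. Unset Strict Implicit. Unset Printing Implicit Defensive.
Import Order.TTheory GRing.Theory Num.Theory.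
Local Open Scope classical_set_scope.
Local Open Scope ring_scope.

Section Defs.
Variable R : realType.

Definition is_prob (nu : int -> int -> R) : Prop :=
  (forall a b, 0 <= nu a b) /\
  (\esum_(ab in [set: int * int]) (nu ab.1 ab.2)%:E = 1%E).

Fixpoint nstep (S : choiceType) (P : S -> S -> R) (n : nat) (x y : S) : \bar R :=
  match n with
  | O => (if x == y then 1 else 0)%:E
  | m.+1 => \esum_(z in [set: S]) ((P x z)%:E * nstep P m z y)%E
  end.

Definition irreducible (S : choiceType) (P : S -> S -> R) : Prop :=
  forall x y : S, exists n, (0 < nstep P n x y)%E.

Variables (k0 : nat) (mu : int -> int -> R) (mu' mu'' : nat -> int -> int -> R)
  (muij : nat -> nat -> int -> int -> R).

Definition kerZ (x y : nat * nat) : R :=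
  let a := (y.1%:Z - x.1%:Z)%R in let b := (y.2%:Z - x.2%:Z)%R in
  if (k0 <= x.1)%N then (if (k0 <= x.2)%N then mu a b else mu' x.2 a b)
  else (if (k0 <= x.2)%N then mu'' x.1 a b else muij x.1 x.2 a b).

Definition kerZ0 (x y : int * int) : R := mu (y.1 - x.1) (y.2 - x.2).

Definition kerZ1 (x y : nat * int) : R :=
  let a := (y.1%:Z - x.1%:Z)%R in let b := (y.2 - x.2)%R in
  if (k0 <= x.1)%N then mu a b else mu'' x.1 a b.

Definition kerZ2 (x y : int * nat) : R :=
  let a := (y.1 - x.1)%R in let b := (y.2%:Z - x.2%:Z)%R in
  if (k0 <= x.2)%N then mu a b else mu' x.2 a b.

(* m1 = sum_{a,b} a mu(a,b), as (positive part) - (negative part) *)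
Definition m1 : \bar R :=
  (\esum_(ab in [set: int * int]) (Num.max 0 (ab.1%:~R * mu ab.1 ab.2))%:E
   - \esum_(ab in [set: int * int]) (Num.max 0 (- (ab.1%:~R * mu ab.1 ab.2)))%:E)%E.

(* avoid K n x = P_x(X_1(1) > K, ..., X_1(n) > K) for the chain Z1 *)
Fixpoint avoid1 (K : nat) (n : nat) (x : nat * int) : \bar R :=
  match n with
  | O => 1%E
  | m.+1 => \esum_(y in [set: nat * int])
              ((kerZ1 x y)%:E * (if (K < y.1)%N then avoid1 K m y else 0%E))%E
  end.

(* P_{(i,j)}(T_1^k >= n), T_1^k = inf{n>0 : X_1(n) <= max(k0-1,k)} *)
Definition probT1_ge (k n : nat) (x : nat * int) : \bar R :=
  avoid1 (maxn (k0.-1) k) n.-1 x.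

End Defs.

(* Let Phi_nu(l) = sum_(a,b) nu(a,b) e^(l a) be the exponential moment of the
   horizontal jump of a law nu on Z^2.  Read at the states (i, k0), (A2) bounds
   Phi_mu and every Phi_(mu''_i) on [0, dl] by one constant B.  The jumps of mu
   are bounded below, so e^x <= 1 + x + 4 x^2 e^(max(x,0)) gives
   Phi_mu(l) <= 1 + l m1 + O(l^2), and m1 < 0 provides l in (0, theta] with
   rho := Phi_mu(l) < 1.  Strictly above the level K = max(k0 - 1, k) the chain
   Z1 jumps with law mu, so rho^(-n) e^(l X_1(n)) is a supermartingale up to
   T_1^k: the probability to stay above K for n steps from x is at most
   rho^n e^(l x_1), and the first step from an arbitrary state costs a factor B.
   This is the claim with delta = - ln rho, since l <= theta. *)

From HB Require Import structures.
From mathcomp Require Import all_boot all_order all_algebra.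
From mathcomp Require Import all_classical all_reals all_analysis.
From mathcomp Require Import ring lra zify.
Import Order.TTheory GRing.Theory Num.Theory.
Local Open Scope classical_set_scope.
Local Open Scope ring_scope.

Section esum_extra.
Context {R : realType}.
Local Open Scope ereal_scope.

Lemma esumZl_le {T : choiceType} (I : set T) (c : R) (f : T -> \bar R) :
  (0 <= c)%R -> (forall i, 0 <= f i) ->
  \esum_(i in I) (c%:E * f i) <= c%:E * \esum_(i in I) f i.
Proof.
move=> c0 f0; apply: ge_ereal_sup => _ [X [finX XI] <-] /=.
rewrite -ge0_mule_fsumr//; apply: lee_wpmul2l; first by rewrite lee_fin.
by apply: ereal_sup_ubound; exists X.
Qed.

Lemma esumZl {T : choiceType} (I : set T) (c : R) (f : T -> \bar R) :
  (0 <= c)%R -> (forall i, 0 <= f i) ->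
  \esum_(i in I) (c%:E * f i) = c%:E * \esum_(i in I) f i.
Proof.
move=> c0 f0; apply/eqP; rewrite eq_le esumZl_le //=.
have [->|cn0] := eqVneq c 0%R; first by rewrite mul0e esum_ge0// => i _; rewrite mul0e.
have cgt0 : (0 < c)%R by rewrite lt_def cn0.
have cV0 : (0 <= c^-1)%R by rewrite invr_ge0.
rewrite [X in (_ * X <= _)%E](_ : _ = \esum_(i in I) (c^-1%:E * (c%:E * f i))); last first.
  by apply: eq_esum => i _; rewrite muleA -EFinM mulVf ?gt_eqF// mul1e.
apply: (@le_trans _ _ (c%:E * (c^-1%:E * \esum_(i in I) (c%:E * f i)))).
  apply: lee_wpmul2l; first by rewrite lee_fin.
  by apply: esumZl_le => // i; rewrite mule_ge0// lee_fin.
by rewrite muleA -EFinM mulfV ?gt_eqF// mul1e.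
Qed.

Lemma esumEFinZl {T : choiceType} (I : set T) (c : R) (f : T -> R) :
  (0 <= c)%R -> (forall i, 0 <= f i)%R ->
  \esum_(i in I) (c * f i)%:E = c%:E * \esum_(i in I) (f i)%:E.
Proof.
move=> c0 f0; under eq_esum do rewrite EFinM.
by apply: esumZl => // i; rewrite lee_fin.
Qed.

Lemma esum_comp_inj_le {S T : choiceType} (e : S -> T) (f : T -> \bar R) :
  injective e -> (forall y, 0 <= f y) ->
  \esum_(x in [set: S]) f (e x) <= \esum_(y in [set: T]) f y.
Proof.
move=> inj_e f0; rewrite -(esum_image setT e f); last by move=> x y _ _ /inj_e.
by rewrite [leLHS]esum_mkcond; apply: le_esum => y _; case: ifP.
Qed.

Lemma esum_comp_inj {S T : choiceType} (e : S -> T) (f : T -> \bar R) :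
  injective e -> (forall y, ~ range e y -> f y = 0) ->
  \esum_(y in [set: T]) f y = \esum_(x in [set: S]) f (e x).
Proof.
move=> inj_e f0; rewrite -(esum_image setT e f); last by move=> x y _ _ /inj_e.
rewrite [RHS]esum_mkcond; apply: eq_esum => y _.
by case: ifPn => // /negP; rewrite inE => /f0.
Qed.

End esum_extra.

Section expR_bounds.
Context {R : realType}.
Implicit Types x a k dl lam : R.

Lemma expR_le_quadratic x : expR x <= 1 + x + 4 * x ^+ 2 * expR (Num.max x 0).
Proof.
have [xle|xgt] := lerP x (1 / 2); last first.
  have -> : Num.max x 0 = x by rewrite max_l //; lra.
  have : 1 <= 4 * x ^+ 2 by rewrite expr2; nra.
  have := expR_ge0 x; nra.
have x2ge0 : 0 <= x ^+ 2 := sqr_ge0 x.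
have : 1 <= expR (Num.max x 0) by rewrite -expR0 ler_expR le_max lexx orbT.
suff : expR x <= 1 + x + 4 * x ^+ 2 by nra.
(* for x <= 1/2: (1 - x) e^x <= e^(-x) e^x = 1 <= (1 - x) (1 + x + 4 x^2) *)
have h1 : expR x * (1 - x) <= 1.
  by rewrite -[leRHS](expRxMexpNx_1 x) ler_pM2l ?expR_gt0 //; have := expR_ge1Dx (- x); lra.
have h2 : 1 <= (1 - x) * (1 + x + 4 * x ^+ 2).
  have -> : (1 - x) * (1 + x + 4 * x ^+ 2) = 1 + x ^+ 2 * (3 - 4 * x).
    by rewrite !expr2; ring.
  by rewrite lerDl mulr_ge0 //; lra.
have := expR_gt0 x; nra.
Qed.

Lemma sqr_expR_half_le dl a : 0 < dl -> 0 <= a ->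
  a ^+ 2 * expR (dl * a / 2) <= 16 / dl ^+ 2 * expR (dl * a).
Proof.
move=> dl0 a0.
have t0 : 0 <= dl * a / 4 by rewrite divr_ge0 // mulr_ge0 // ltW.
have e_half : expR (dl * a / 2) = expR (dl * a / 4) ^+ 2.
  by rewrite -expRM_natl; congr expR; field.
have e_full : expR (dl * a) = expR (dl * a / 2) * expR (dl * a / 2).
  by rewrite -expRD; congr expR; field.
have sq_le : (dl * a / 4) ^+ 2 <= expR (dl * a / 2).
  by rewrite e_half !expr2; have := expR_ge1Dx (dl * a / 4); nra.
have -> : a ^+ 2 = 16 / dl ^+ 2 * (dl * a / 4) ^+ 2.
  by rewrite !expr2; field; rewrite gt_eqF.
rewrite e_full; set c := 16 / dl ^+ 2.
have c0 : 0 <= c by rewrite divr_ge0 ?exprn_ge0 ?ltW.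
by rewrite [leRHS]mulrA; apply: ler_wpM2r; [exact: expR_ge0 | exact: ler_wpM2l].
Qed.

Lemma sqr_expR_le dl lam k a : 0 < dl -> 0 <= lam -> lam <= dl / 2 -> - k <= a ->
  a ^+ 2 * expR (lam * Num.max a 0) <= k ^+ 2 + 16 / dl ^+ 2 * expR (dl * a).
Proof.
move=> dl0 lam0 lamle ak.
have rest0 : 0 <= 16 / dl ^+ 2 * expR (dl * a).
  by rewrite mulr_ge0 ?expR_ge0 // divr_ge0 // exprn_ge0 // ltW.
have [a0|a0] := lerP 0 a; last first.
  rewrite mulr0 expR0 mulr1.
  have : a ^+ 2 <= k ^+ 2 by rewrite !expr2; nra.
  lra.
have : expR (lam * a) <= expR (dl * a / 2) by rewrite ler_expR; nra.
have := sqr_expR_half_le _ _ dl0 a0; have := sqr_ge0 a; have := sqr_ge0 k.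
nra.
Qed.

Lemma expR_second_order dl lam k a : 0 < dl -> 0 <= lam -> lam <= dl / 2 -> - k <= a ->
  expR (lam * a) <= 1 + lam * a + 4 * lam ^+ 2 * (k ^+ 2 + 16 / dl ^+ 2 * expR (dl * a)).
Proof.
move=> dl0 lam0 lamle ak.
have max_lam : Num.max (lam * a) 0 = lam * Num.max a 0.
  have [a0|a0] := lerP 0 a; first by rewrite !max_l // mulr_ge0.
  by rewrite mulr0 max_r //; nra.
have := expR_le_quadratic (lam * a); rewrite max_lam exprMn -!mulrA.
have := sqr_expR_le _ _ _ _ dl0 lam0 lamle ak.
have := sqr_ge0 lam; have := expR_ge0 (lam * Num.max a 0).
nra.
Qed.

End expR_bounds.

Definition mgf1 {R : realType} (nu : int -> int -> R) (lam : R) : \bar R :=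
  \esum_(ab in [set: int * int]) (nu ab.1 ab.2 * expR (lam * ab.1%:~R))%:E.

Definition mean1_pos {R : realType} (nu : int -> int -> R) : \bar R :=
  \esum_(ab in [set: int * int]) (Num.max 0 (ab.1%:~R * nu ab.1 ab.2))%:E.

Definition mean1_neg {R : realType} (nu : int -> int -> R) : \bar R :=
  \esum_(ab in [set: int * int]) (Num.max 0 (- (ab.1%:~R * nu ab.1 ab.2)))%:E.

Section negative_drift.
Context {R : realType} (nu : int -> int -> R) (k : nat) (nu_prob : is_prob nu)
  (nu_eq0 : forall a b, a < - k%:Z -> nu a b = 0).

Let nu_ge0 (ab : int * int) : 0 <= nu ab.1 ab.2 := nu_prob.1 ab.1 ab.2.

Let nu_neq0 a b : nu a b != 0 -> - k%:R <= a%:~R :> R.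
Proof.
apply: contraR; rewrite -ltNge => ak; apply/eqP/nu_eq0.
by rewrite -(ltr_int R) intrN.
Qed.

Lemma mean1_neg_le : (mean1_neg nu <= k%:R%:E)%E.
Proof.
apply: (@le_trans _ _ (\esum_(ab in [set: int * int]) (k%:R * nu ab.1 ab.2)%:E)).
  apply: le_esum => -[a b] _ /=; rewrite lee_fin.
  have [->|/nu_neq0 ak] := eqVneq (nu a b) 0; first by rewrite !mulr0 oppr0 maxxx.
  have := nu_ge0 (a, b); have : 0 <= k%:R :> R by [].
  by rewrite ge_max; nra.
by rewrite (esumEFinZl _ _ _ (ler0n _ k) nu_ge0) nu_prob.2 mule1.
Qed.

Lemma mean1_fin : (m1 nu < 0)%E ->
  exists p n : R, [/\ 0 <= p, p < n, mean1_pos nu = p%:E & mean1_neg nu = n%:E].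
Proof.
have pos0 : (0 <= mean1_pos nu)%E by apply: esum_ge0 => ab _; rewrite lee_fin le_max lexx.
have neg0 : (0 <= mean1_neg nu)%E by apply: esum_ge0 => ab _; rewrite lee_fin le_max lexx.
rewrite /m1 -/(mean1_pos nu) -/(mean1_neg nu); move: pos0 neg0 mean1_neg_le.
case: (mean1_neg nu) => [n| |] //; case: (mean1_pos nu) => [p| |] // p0 _ _.
by rewrite -EFinB lte_fin subr_lt0 => pn; exists p, n.
Qed.

Lemma nu_expR_second_order (dl lam : R) a b : 0 < dl -> 0 <= lam -> lam <= dl / 2 ->
  nu a b * expR (lam * a%:~R) + lam * Num.max 0 (- (a%:~R * nu a b)) <=
  nu a b + lam * Num.max 0 (a%:~R * nu a b) +
  4 * lam ^+ 2 * (nu a b * (k%:R ^+ 2 + 16 / dl ^+ 2 * expR (dl * a%:~R))).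
Proof.
move=> dl0 lam0 lamle; have m0 := nu_ge0 (a, b).
have [->|/nu_neq0 ak] := eqVneq (nu a b) 0.
  by rewrite !(mul0r, mulr0, oppr0, maxxx, addr0).
have := ler_wpM2l m0 (expR_second_order _ _ _ _ dl0 lam0 lamle ak).
have : Num.max 0 (a%:~R * nu a b) - Num.max 0 (- (a%:~R * nu a b)) = a%:~R * nu a b.
  by case: (lerP 0 (a%:~R * nu a b)) => h; case: (lerP 0 (- (a%:~R * nu a b))) => h'; lra.
nra.
Qed.

Lemma esum_quadratic_weight_le (dl Bd : R) : 0 < dl -> (mgf1 nu dl <= Bd%:E)%E ->
  (\esum_(ab in [set: int * int])
     (nu ab.1 ab.2 * (k%:R ^+ 2 + 16 / dl ^+ 2 * expR (dl * ab.1%:~R)))%:E <=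
   (k%:R ^+ 2 + 16 / dl ^+ 2 * Bd)%:E)%E.
Proof.
move=> dl0 mgf_dl.
have c16 : 0 <= 16 / dl ^+ 2 :> R by rewrite divr_ge0 ?exprn_ge0 ?ltW.
pose e (ab : int * int) := nu ab.1 ab.2 * expR (dl * ab.1%:~R).
have e0 ab : 0 <= e ab by rewrite mulr_ge0 ?nu_ge0 ?expR_ge0.
rewrite (@eq_esum _ _ _ _ (fun ab => (k%:R ^+ 2 * nu ab.1 ab.2)%:E +
    (16 / dl ^+ 2 * e ab)%:E)%E); last first.
  by move=> ab _; rewrite -EFinD /e; congr EFin; ring.
have k2nu0 : forall ab : int * int, (0 <= (k%:R ^+ 2 * nu ab.1 ab.2)%:E)%E.
  by move=> ab; rewrite lee_fin mulr_ge0 ?sqr_ge0.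
have c16e0 : forall ab : int * int, (0 <= (16 / dl ^+ 2 * e ab)%:E)%E.
  by move=> ab; rewrite lee_fin mulr_ge0 ?e0.
rewrite (esumD (fun ab _ => k2nu0 ab) (fun ab _ => c16e0 ab)).
rewrite !esumEFinZl ?sqr_ge0 // nu_prob.2 mule1 EFinD.
by apply: leeD => //; rewrite (EFinM (16 / dl ^+ 2)) lee_wpmul2l ?lee_fin.
Qed.

Lemma mgf1_second_order (dl lam Bd : R) : 0 < dl -> 0 <= lam -> lam <= dl / 2 ->
  (mgf1 nu dl <= Bd%:E)%E ->
  (mgf1 nu lam + lam%:E * mean1_neg nu <=
   1 + lam%:E * mean1_pos nu + (4 * lam ^+ 2 * (k%:R ^+ 2 + 16 / dl ^+ 2 * Bd))%:E)%E.
Proof.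
move=> dl0 lam0 lamle mgf_dl.
pose g (ab : int * int) := k%:R ^+ 2 + 16 / dl ^+ 2 * expR (dl * ab.1%:~R).
have c4 : 0 <= 4 * lam ^+ 2 :> R by rewrite mulr_ge0 ?sqr_ge0.
have max0 (x : R) : 0 <= Num.max 0 x by rewrite le_max lexx.
have c16 : 0 <= 16 / dl ^+ 2 :> R by rewrite divr_ge0 ?exprn_ge0 ?ltW.
have nu_g0 ab : 0 <= nu ab.1 ab.2 * g ab.
  by rewrite mulr_ge0 ?nu_ge0 // addr_ge0 ?sqr_ge0 // (mulr_ge0 c16) ?expR_ge0.
have mass0 : forall ab : int * int, (0 <= (nu ab.1 ab.2)%:E)%E.
  by move=> ab; rewrite lee_fin.
have gain0 (x : R) : (0 <= (lam * Num.max 0 x)%:E)%E by rewrite lee_fin mulr_ge0.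
have quad0 : forall ab : int * int, (0 <= (4 * lam ^+ 2 * (nu ab.1 ab.2 * g ab))%:E)%E.
  by move=> ab; rewrite lee_fin mulr_ge0.
have mgf_term0 : forall ab : int * int,
    (0 <= (nu ab.1 ab.2 * expR (lam * ab.1%:~R))%:E)%E.
  by move=> ab; rewrite lee_fin mulr_ge0 ?nu_ge0 ?expR_ge0.
apply: (@le_trans _ _ (\esum_(ab in [set: int * int])
    ((nu ab.1 ab.2)%:E + (lam * Num.max 0 (ab.1%:~R * nu ab.1 ab.2))%:E +
     (4 * lam ^+ 2 * (nu ab.1 ab.2 * g ab))%:E))%E).
  rewrite /mgf1 /mean1_neg -(esumEFinZl _ _ _ lam0 (fun=> max0 _)).
  rewrite -(esumD (fun ab _ => mgf_term0 ab) (fun ab _ => gain0 _)).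
  apply: le_esum => -[a b] _; rewrite -!EFinD lee_fin.
  exact: nu_expR_second_order.
rewrite (esumD (fun ab _ => adde_ge0 (mass0 ab) (gain0 _)) (fun ab _ => quad0 ab)).
rewrite (esumD (fun ab _ => mass0 ab) (fun ab _ => gain0 _)).
rewrite nu_prob.2 (esumEFinZl _ _ _ lam0 (fun=> max0 _)) (esumEFinZl _ _ _ c4 nu_g0).
apply: leeD => //; rewrite (EFinM (4 * lam ^+ 2)) lee_wpmul2l ?lee_fin //.
exact: esum_quadratic_weight_le.
Qed.

Lemma mgf1_lt1 (dl Bd theta : R) : 0 < dl -> 0 < theta -> (m1 nu < 0)%E ->
  (mgf1 nu dl <= Bd%:E)%E ->
  exists lam rho : R,
    [/\ 0 < lam, lam <= theta, lam <= dl, 0 < rho < 1 & (mgf1 nu lam <= rho%:E)%E].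
Proof.
move=> dl0 theta0 m1_lt0 mgf_dl.
have [p [n [p0 pn posE negE]]] := mean1_fin m1_lt0.
have mgf0 lam : (0 <= mgf1 nu lam)%E.
  by apply: esum_ge0 => ab _; rewrite lee_fin mulr_ge0 ?nu_ge0 ?expR_ge0.
have Bd0 : 0 <= Bd by rewrite -lee_fin (le_trans (mgf0 dl)).
pose s := k%:R ^+ 2 + 16 / dl ^+ 2 * Bd.
have s0 : 0 <= s by rewrite addr_ge0 ?sqr_ge0 // mulr_ge0 // divr_ge0 ?exprn_ge0 ?ltW.
have s1 : 0 < 8 * (s + 1) by rewrite mulr_gt0 //; lra.
(* small enough that the quadratic term 4 lam^2 s eats at most half of the gain lam (n - p) *)
pose lam := Num.min theta (Num.min (dl / 2) ((n - p) / (8 * (s + 1)))).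
have lam0 : 0 < lam by rewrite !lt_min theta0 !divr_gt0 ?subr_gt0.
have [lam_theta lam_dl lam_np] : [/\ lam <= theta, lam <= dl / 2 &
    lam <= (n - p) / (8 * (s + 1))] by rewrite !ge_min !lexx !orbT.
have quad_le : 4 * lam ^+ 2 * s <= lam * (n - p) / 2.
  move: lam_np; rewrite ler_pdivlMr // => lam_np.
  have := ler_wpM2l (ltW lam0) lam_np; have := sqr_ge0 lam; rewrite expr2; nra.
have := mgf1_second_order _ _ _ dl0 (ltW lam0) lam_dl mgf_dl.
rewrite posE negE -/s; move: (mgf0 lam); case mgfE: (mgf1 nu lam) => // [r] r0.
rewrite -!EFinM -!EFinD !lee_fin => mgf_le.
have gain : 0 < lam * (n - p) by rewrite mulr_gt0 ?subr_gt0.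
exists lam, (Num.max (1 / 2) (1 - lam * (n - p) / 2)); split => //; first lra.
  rewrite lt_max gt_max; apply/andP; split; first by apply/orP; left; lra.
  by apply/andP; split; lra.
by rewrite mgfE lee_fin le_max; apply/orP; right; lra.
Qed.

End negative_drift.

Lemma mgf1_le_exp_moment {R : realType} (nu : int -> int -> R) (i j : nat)
    (dl gm lam : R) :
  0 <= lam -> lam <= dl -> 0 <= gm -> (forall a b, 0 <= nu a b) ->
  (forall a b, a < - i%:Z \/ b < - j%:Z -> nu a b = 0) ->
  (mgf1 nu lam <= (expR (dl * i%:R + gm * j%:R))%:E *
     \esum_(y in [set: nat * nat]) (nu (y.1%:Z - i%:Z) (y.2%:Z - j%:Z) *
        expR (dl * (y.1%:R - i%:R) + gm * (y.2%:R - j%:R)))%:E)%E.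
Proof.
move=> lam0 lam_dl gm0 nu_ge0 nu_eq0.
pose e (y : nat * nat) : int * int := (y.1%:Z - i%:Z, y.2%:Z - j%:Z).
have inj_e : injective e by move=> [y1 y2] [z1 z2] [] /addIr [->] /addIr [->].
rewrite /mgf1 (esum_comp_inj _ _ inj_e); last first.
  move=> [a b] not_img; rewrite nu_eq0 ?mul0r //.
  have [ai|ai] := ltrP a (- i%:Z); first by left.
  have [bj|bj] := ltrP b (- j%:Z); first by right.
  exfalso; apply: not_img; exists (absz (a + i%:Z), absz (b + j%:Z)) => //.
  by rewrite /e /= !gez0_abs ?addrK // -lerBlDr sub0r.
rewrite -esumEFinZl ?expR_ge0 // => [|y]; last first.
  by rewrite mulr_ge0 ?nu_ge0 ?expR_ge0.
apply: le_esum => -[y1 y2] _; rewrite /e /= lee_fin intrB mulrCA.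
rewrite ler_wpM2l // -expRD ler_expR.
have y10 : 0 <= y1%:R :> R by []; have y20 : 0 <= y2%:R :> R by [].
have i0 : 0 <= i%:R :> R by [].
have dl0 : 0 <= dl := le_trans lam0 lam_dl.
have := mulr_ge0 dl0 i0; have := mulr_ge0 gm0 y20.
have [iy|yi] := lerP (i%:R : R) y1%:R.
  have : lam * (y1%:R - i%:R) <= dl * (y1%:R - i%:R) by rewrite ler_wpM2r ?subr_ge0.
  lra.
have : lam * (y1%:R - i%:R) <= 0 by rewrite mulr_ge0_le0 //; lra.
have := mulr_ge0 dl0 y10; lra.
Qed.

Section chain_Z1.
Context {R : realType} (k0 : nat) (mu : int -> int -> R)
  (mu'' : nat -> int -> int -> R) (mu_ge0 : forall a b, 0 <= mu a b)
  (mu''_ge0 : forall i a b, (i < k0)%N -> 0 <= mu'' i a b).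

Definition rowZ1 (i : nat) : int -> int -> R := if (k0 <= i)%N then mu else mu'' i.

Lemma rowZ1_ge0 i a b : 0 <= rowZ1 i a b.
Proof. by rewrite /rowZ1; case: leqP => [_|/mu''_ge0]; [exact: mu_ge0 | apply]. Qed.

Lemma rowZ1_minn i : rowZ1 (minn i k0) = rowZ1 i.
Proof. by rewrite /rowZ1; case: (leqP k0 i) => h; rewrite ?leqnn // leqNgt h. Qed.

Lemma kerZ1E x y : kerZ1 k0 mu mu'' x y = rowZ1 x.1 (y.1%:Z - x.1%:Z) (y.2 - x.2).
Proof. by rewrite /kerZ1 /rowZ1; case: ifP. Qed.

Lemma kerZ1_ge0 x y : 0 <= kerZ1 k0 mu mu'' x y.
Proof. by rewrite kerZ1E rowZ1_ge0. Qed.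

Lemma esum_kerZ1_expR x lam :
  (\esum_(y in [set: nat * int])
     (kerZ1 k0 mu mu'' x y * expR (lam * (y.1%:R - x.1%:R)))%:E
   <= mgf1 (rowZ1 x.1) lam)%E.
Proof.
pose e (y : nat * int) : int * int := (y.1%:Z - x.1%:Z, y.2 - x.2).
have inj_e : injective e.
  by move=> [y1 y2] [z1 z2] [] /addIr [->] /addIr ->.
apply: le_trans (esum_comp_inj_le _ _ inj_e _) => [|ab]; last first.
  by rewrite lee_fin mulr_ge0 ?rowZ1_ge0 ?expR_ge0.
by apply: le_esum => y _; rewrite kerZ1E intrB.
Qed.

Lemma kerZ_rowZ1 (mu' : nat -> int -> int -> R) (muij : nat -> nat -> int -> int -> R)
    i y :
  kerZ k0 mu mu' mu'' muij (i, k0) y = rowZ1 i (y.1%:Z - i%:Z) (y.2%:Z - k0%:Z).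
Proof. by rewrite /kerZ /rowZ1 /= leqnn; case: ifP. Qed.

Section avoidance.
Variables (K : nat) (lam rho : R).
Hypotheses (K_ge : (k0.-1 <= K)%N) (lam0 : 0 <= lam) (rho0 : 0 < rho)
  (mgf_mu : (mgf1 mu lam <= rho%:E)%E).

Lemma avoid1S_le m x (c : R) : 0 <= c ->
  (forall y, (K < y.1)%N -> (avoid1 k0 mu mu'' K m y <= (c * expR (lam * y.1%:R))%:E)%E) ->
  (avoid1 k0 mu mu'' K m.+1 x <=
    (c * expR (lam * x.1%:R))%:E * mgf1 (rowZ1 x.1) lam)%E.
Proof.
move=> c0 avoid_le /=.
apply: le_trans (lee_wpmul2l _ (esum_kerZ1_expR x lam)); last first.
  by rewrite lee_fin mulr_ge0 ?expR_ge0.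
rewrite -esumEFinZl ?mulr_ge0 ?expR_ge0 // => [|y]; last first.
  by rewrite mulr_ge0 ?kerZ1_ge0 ?expR_ge0.
apply: le_esum => y _; case: ifP => [Ky|_]; last first.
  by rewrite mule0 lee_fin !mulr_ge0 ?kerZ1_ge0 ?expR_ge0.
apply: le_trans (lee_wpmul2l _ (avoid_le y Ky)) _; first by rewrite lee_fin kerZ1_ge0.
rewrite -EFinM lee_fin le_eqVlt; apply/orP; left; apply/eqP.
have -> : expR (lam * y.1%:R) = expR (lam * x.1%:R) * expR (lam * (y.1%:R - x.1%:R)).
  by rewrite -expRD; congr expR; ring.
ring.
Qed.

Lemma avoid1_le_above m x : (K < x.1)%N ->
  (avoid1 k0 mu mu'' K m x <= (rho ^+ m * expR (lam * x.1%:R))%:E)%E.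
Proof.
elim: m x => [|m IH] x Kx.
  by rewrite /= lee_fin mul1r -expR0 ler_expR mulr_ge0.
have rho_m0 : 0 <= rho ^+ m by rewrite exprn_ge0 ?ltW.
apply: le_trans (avoid1S_le _ _ _ rho_m0 IH) _.
have -> : rowZ1 x.1 = mu by rewrite /rowZ1 ifT //; move: K_ge Kx; lia.
apply: le_trans (lee_wpmul2l _ mgf_mu) _; first by rewrite lee_fin mulr_ge0 ?expR_ge0.
by rewrite -EFinM lee_fin exprSr mulrAC.
Qed.

Lemma avoid1_le (B : R) : (forall i, (mgf1 (rowZ1 i) lam <= B%:E)%E) -> forall n x,
  (avoid1 k0 mu mu'' K n x <=
    (Num.max 1 (B / rho) * rho ^+ n * expR (lam * x.1%:R))%:E)%E.
Proof.
move=> mgf_row [|m] x.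
  rewrite /= lee_fin mulr1 -[1 in leLHS]mulr1 ler_pM ?le_max ?lexx //.
  by rewrite -expR0 ler_expR mulr_ge0.
have rho_m0 : 0 <= rho ^+ m by rewrite exprn_ge0 ?ltW.
apply: le_trans (avoid1S_le _ _ _ rho_m0 (fun y => avoid1_le_above m y)) _.
apply: le_trans (lee_wpmul2l _ (mgf_row x.1)) _; first by rewrite lee_fin mulr_ge0 ?expR_ge0.
have B_le : B <= Num.max 1 (B / rho) * rho by rewrite -ler_pdivrMr // le_max lexx orbT.
have := ler_wpM2l (mulr_ge0 rho_m0 (expR_ge0 (lam * x.1%:R))) B_le.
by rewrite -EFinM lee_fin exprSr; lra.
Qed.

End avoidance.

Lemma probT1_ge_le (lam rho B : R) k n x : 0 <= lam -> 0 < rho -> rho <= 1 ->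
  (mgf1 mu lam <= rho%:E)%E -> (forall i, (mgf1 (rowZ1 i) lam <= B%:E)%E) ->
  (probT1_ge k0 mu mu'' k n x <=
    (Num.max 1 (B / rho) / rho * expR (lam * x.1%:R + ln rho * n%:R))%:E)%E.
Proof.
move=> lam0 rho0 rho1 mgf_mu mgf_row.
apply: le_trans (avoid1_le _ _ _ (leq_maxl _ k) lam0 rho0 mgf_mu _ mgf_row n.-1 x) _.
have Cb0 : 0 <= Num.max 1 (B / rho) by rewrite le_max ler01.
(* probT1_ge k n counts only n.-1 steps; the factor 1 / rho pays for the shift *)
have pow_pred : rho ^+ n.-1 <= rho ^+ n / rho.
  case: n => [|n]; last by rewrite exprSr mulfK ?gt_eqF.
  by rewrite expr0 mul1r invf_ge1.
rewrite lee_fin expRD (mulrC (ln rho)) expRM_natl lnK ?posrE //.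
have -> : Num.max 1 (B / rho) / rho * (expR (lam * x.1%:R) * rho ^+ n) =
    Num.max 1 (B / rho) * (rho ^+ n / rho) * expR (lam * x.1%:R) by ring.
by rewrite ler_wpM2r ?expR_ge0 // ler_wpM2l.
Qed.

Section exp_moment.
Variables (mu' : nat -> int -> int -> R) (muij : nat -> nat -> int -> int -> R).
Hypotheses (mu_eq0 : forall a b, (a < - k0%:Z \/ b < - k0%:Z) -> mu a b = 0)
  (mu''_eq0 : forall i a b, (i < k0)%N -> (b < - k0%:Z \/ a < - i%:Z) -> mu'' i a b = 0).

Lemma rowZ1_eq0 i a b : (i <= k0)%N -> a < - i%:Z \/ b < - k0%:Z -> rowZ1 i a b = 0.
Proof.
rewrite /rowZ1; case: (leqP k0 i) => [k0i ik0|ik0 _ ab].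
  have -> : i = k0 by apply/eqP; rewrite eqn_leq ik0 k0i.
  exact: mu_eq0.
by apply: mu''_eq0 => //; case: ab; [right | left].
Qed.

Lemma mgf1_rowZ1_le (dl gm C lam : R) i : 0 <= lam -> lam <= dl -> 0 <= gm ->
  (forall x : nat * nat, (\esum_(y in [set: nat * nat])
      (kerZ k0 mu mu' mu'' muij x y *
       expR (dl * (y.1%:R - x.1%:R) + gm * (y.2%:R - x.2%:R)))%:E <= C%:E)%E) ->
  (mgf1 (rowZ1 i) lam <= (expR (dl * k0%:R + gm * k0%:R) * C)%:E)%E.
Proof.
move=> lam0 lam_dl gm0 exp_moment; rewrite -rowZ1_minn.
have ik0 : (minn i k0 <= k0)%N := geq_minr i k0.
have := mgf1_le_exp_moment _ _ _ _ _ _ lam0 lam_dl gm0 (rowZ1_ge0 _)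
  (fun a b => rowZ1_eq0 _ a b ik0).
move/le_trans; apply.
under eq_esum do rewrite -(kerZ_rowZ1 mu' muij).
rewrite EFinM; apply: lee_pmul.
- by rewrite lee_fin expR_ge0.
- apply: esum_ge0 => y _.
  by rewrite lee_fin mulr_ge0 ?expR_ge0 // kerZ_rowZ1 rowZ1_ge0.
- rewrite lee_fin ler_expR lerD2r ler_wpM2l ?ler_nat //.
  exact: le_trans lam0 lam_dl.
- exact: exp_moment (minn i k0, k0).
Qed.

End exp_moment.

End chain_Z1.

Theorem lemma5p2 (R : realType) (k0 : nat)
  (mu : int -> int -> R) (mu' mu'' : nat -> int -> int -> R)
  (muij : nat -> nat -> int -> int -> R)
  (hk0 : (1 <= k0)%N)
  (Pmu : is_prob mu)
  (Pmu' : forall j, (j < k0)%N -> is_prob (mu' j))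
  (Pmu'' : forall i, (i < k0)%N -> is_prob (mu'' i))
  (Pmuij : forall i j, (i < k0)%N -> (j < k0)%N -> is_prob (muij i j))
  (A1mu : forall a b, (a < - k0%:Z \/ b < - k0%:Z) -> mu a b = 0)
  (A1mu' : forall j a b, (j < k0)%N -> (a < - k0%:Z \/ b < - j%:Z) -> mu' j a b = 0)
  (A1mu'' : forall i a b, (i < k0)%N -> (b < - k0%:Z \/ a < - i%:Z) -> mu'' i a b = 0)
  (A1muij : forall i j a b, (i < k0)%N -> (j < k0)%N ->
     (a < - i%:Z \/ b < - j%:Z) -> muij i j a b = 0)
  (A2 : exists (dl gm C : R), 0 < dl /\ 0 < gm /\ 0 < C /\
     forall x : nat * nat,
       (\esum_(y in [set: nat * nat])
          (kerZ k0 mu mu' mu'' muij x y *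
           expR (dl * (y.1%:R - x.1%:R) + gm * (y.2%:R - x.2%:R)))%:E <= C%:E)%E)
  (A3Z0 : irreducible (kerZ0 mu))
  (A3Z1 : irreducible (kerZ1 k0 mu mu''))
  (A3Z2 : irreducible (kerZ2 k0 mu mu'))
  (A3Z : irreducible (kerZ k0 mu mu' mu'' muij))
  (hm1 : (m1 mu < 0%E)%E)
  (theta : R) (htheta : 0 < theta) :
  exists (C dl : R), 0 < C /\ 0 < dl /\
    forall (i : nat) (j : int) (k n : nat),
      (probT1_ge k0 mu mu'' k n (i, j) <= (C * expR (theta * i%:R - dl * n%:R))%:E)%E.
Proof.
have mu_ge0 := Pmu.1.
have mu''_ge0 i a b (ik0 : (i < k0)%N) : 0 <= mu'' i a b := (Pmu'' i ik0).1 a b.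
have [dl [gm [C [dl0 [gm0 [_ exp_moment]]]]]] := A2.
pose B := expR (dl * k0%:R + gm * k0%:R) * C.
have mgf_row lam i : 0 <= lam -> lam <= dl -> (mgf1 (rowZ1 k0 mu mu'' i) lam <= B%:E)%E.
  move=> lam0 lam_dl.
  exact: (mgf1_rowZ1_le _ _ _ mu_ge0 mu''_ge0 _ _ A1mu A1mu'' _ _ _ _ _
    lam0 lam_dl (ltW gm0) exp_moment).
have mgf_mu_dl : (mgf1 mu dl <= B%:E)%E.
  by have := mgf_row dl k0 (ltW dl0) (lexx dl); rewrite /rowZ1 leqnn.
have [lam [rho [lam0 lam_theta lam_dl /andP[rho0 rho1] mgf_mu]]] :=
  mgf1_lt1 _ _ Pmu (fun a b ak => A1mu a b (or_introl ak)) _ _ _ dl0 htheta hm1 mgf_mu_dl.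
exists (Num.max 1 (B / rho) / rho), (- ln rho); split.
  by rewrite divr_gt0 // lt_max ltr01.
split; first by rewrite oppr_gt0 ln_lt0 // rho0 rho1.
move=> i j k n.
apply: le_trans (probT1_ge_le _ _ _ mu_ge0 mu''_ge0 _ _ _ k n (i, j) (ltW lam0) rho0
  (ltW rho1) mgf_mu (fun i => mgf_row lam i (ltW lam0) lam_dl)) _.
rewrite lee_fin; apply: ler_wpM2l; first by rewrite divr_ge0 ?(ltW rho0) // le_max ler01.
by rewrite ler_expR /= mulNr opprK lerD2r ler_wpM2r.
Qed.
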